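(* Let $\hat{A}\in\{0,1\}^{n\times n}$ be symmetric with exactly $m$ non-zero entries and no zero row, and let $d_i=\sum_j\hat{A}_{ij}$. Let $V=\{1,\dots,n\}$ be partitioned into $k$ disjoint groups $B_1,\dots,B_k$, and let $\overline{F}\in\mathbb{R}^{n\times n}$ be a $k\times k$ block matrix with respect to this partition: there is a symmetric $C\in\mathbb{R}^{k\times k}$ with $\overline{F}_{ab}=C_{pq}$ whenever $a\in B_p$, $b\in B_q$. Set $c=\sum_{a,b}\overline{F}_{ab}\hat{A}_{ab}$. Consider the Lagrange dual function of the maximum entropy model with one constraint on each node degree and one constraint given by $\overline{F}$: $$L(\lambda_1,\dots,\lambda_n,\mu)=\sum_{a=1}^n\sum_{b=1}^n\log\bigl(1+\exp(\lambda_a+\mu\overline{F}_{ab})\bigr)-\sum_{a=1}^n d_a\lambda_a-c\,\mu ,$$ a convex function on $\mathbb{R}^{n+1}$. Let $W\subseteq\mathbb{R}^{n+1}$ be the linear subspace of vectors $(\lambda,\mu)$ with $\lambda_a=\lambda_b$ whenever $a,b$ lie in the same group $B_p$ and $d_a=d_b$. Then $W$ has dimension at most $\sqrt{2km}+1$, the restriction of $L$ to $W$ is an unconstrained convex function of at most $\sqrt{2km}+1$ free variables, $\inf_{W}L=\inf_{\mathbb{R}^{n+1}}L$, and every minimizer of $L$ on $W$ is a global minimizer of $L$. In particular, the maximum entropy model can be solved by optimizing an unconstrained convex problem with at most $\sqrt{2km}+1$ variables.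
   Context: Maximum entropy (MaxEnt) model: given feature matrices $F_l=[f^l_{ij}]\in\mathbb{R}^{n\times n}$, $l=1,\dots,M$, and an observed adjacency matrix $\hat{A}$, one seeks the distribution $P$ over $\{0,1\}^{n\times n}$ maximizing the entropy $-\mathbb{E}_P[\log P(A)]$ subject to $\mathbb{E}_P[\sum_{i,j}f^l_{ij}A_{ij}]=c_l:=\sum_{i,j}f^l_{ij}\hat{A}_{ij}$ for all $l$. Its solution is obtained from minimizers $(\lambda_l)$ of the Lagrange dual $\sum_{i,j}\log(1+\exp(\sum_l f^l_{ij}\lambda_l))-\sum_l c_l\lambda_l$. A degree constraint for node $a$ corresponds to the feature matrix with ones in row $a$ and zeros elsewhere (multiplier $\lambda_a$), and the global constraint corresponds to $\overline{F}$ (multiplier $\mu$), which yields the function $L$ above. *)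

From Stdlib Require Import Reals Lra Lia.
Open Scope R_scope.

(* Indices are 0-based: nodes are 0..n-1, groups are 0..k-1. *)

Fixpoint rsum (N : nat) (f : nat -> R) : R :=
  match N with
  | O => 0
  | S N' => rsum N' f + f N'
  end.

Fixpoint ncount (N : nat) (P : nat -> bool) : nat :=
  match N with
  | O => O
  | S N' => (ncount N' P + (if P N' then 1 else 0))%nat
  end.

Fixpoint nsum (N : nat) (g : nat -> nat) : nat :=
  match N with
  | O => O
  | S N' => (nsum N' g + g N')%nat
  end.

(* A {0,1}-matrix is given as a boolean matrix A; its real entries are b2R. *)
Definition b2R (b : bool) : R := if b then 1 else 0.

Definition nnz (n : nat) (A : nat -> nat -> bool) : nat :=
  nsum n (fun i => ncount n (fun j => A i j)).

Definition deg (n : nat) (A : nat -> nat -> bool) (i : nat) : R :=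
  rsum n (fun j => b2R (A i j)).

Definition cconst (n : nat) (A : nat -> nat -> bool) (F : nat -> nat -> R) : R :=
  rsum n (fun a => rsum n (fun b => F a b * b2R (A a b))).

(* Vectors of R^{n+1}: a pair (lambda, mu); only lambda a for a < n matter. *)
Definition vec : Type := ((nat -> R) * R)%type.

Definition Ldual (n : nat) (A : nat -> nat -> bool) (F : nat -> nat -> R)
  (x : vec) : R :=
  rsum n (fun a => rsum n (fun b => ln (1 + exp (fst x a + snd x * F a b))))
  - rsum n (fun a => deg n A a * fst x a)
  - cconst n A F * snd x.

Definition veq (n : nat) (x y : vec) : Prop :=
  (forall a, (a < n)%nat -> fst x a = fst y a) /\ snd x = snd y.

Definition vzero : vec := (fun _ => 0, 0).

Definition lincomb (r : nat) (v : nat -> vec) (coef : nat -> R) : vec :=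
  (fun a => rsum r (fun i => coef i * fst (v i) a),
   rsum r (fun i => coef i * snd (v i))).

(* v 0, ..., v (r-1) is a basis of the subspace W (given by membership inW)
   of R^{n+1}; hence dim W = r. *)
Definition is_basis (n : nat) (inW : vec -> Prop) (r : nat) (v : nat -> vec) : Prop :=
  (forall i, (i < r)%nat -> inW (v i)) /\
  (forall w, inW w -> exists coef : nat -> R, veq n w (lincomb r v coef)) /\
  (forall coef : nat -> R, veq n (lincomb r v coef) vzero ->
     forall i, (i < r)%nat -> coef i = 0).

Definition inW (n : nat) (A : nat -> nat -> bool) (grp : nat -> nat) (x : vec) : Prop :=
  forall a b, (a < n)%nat -> (b < n)%nat -> grp a = grp b ->
    deg n A a = deg n A b -> fst x a = fst x b.

(* convexity of a function on R^r (coordinates nat -> R, only i < r used) *)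
Definition convex_on_Rr (G : (nat -> R) -> R) : Prop :=
  forall (c1 c2 : nat -> R) (t : R), 0 <= t <= 1 ->
    G (fun i => t * c1 i + (1 - t) * c2 i) <= t * G c1 + (1 - t) * G c2.

(* L is a sum of softplus terms of affine functions, hence convex.  Call two nodes
   equivalent when they lie in the same group and have the same degree.  Replacing lambda
   by its average over equivalence classes does not increase L: the partial derivative of
   the softplus part in lambda_a at the averaged point is constant on classes (F_ab depends
   only on the group of a), so is d_a, and averaging is orthogonal to class-constant
   vectors; the tangent-line inequality of softplus then gives L(x) >= L(avg x).  Hence
   inf_W L = inf L and minimizers on W are global.  W is spanned by the class indicators and
   the mu-direction.  Within a group the classes have pairwise distinct degrees, which are
   positive since A has no zero row, so c_p classes in group p carry degree sum at least
   c_p (c_p + 1) / 2; summing over the k groups and applying Cauchy-Schwarz bounds the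
   squared number of classes by 2 k m. *)

From Stdlib Require Import Reals Lra Lia List.
Open Scope R_scope.

Lemma rsum_ext N f g : (forall i, (i < N)%nat -> f i = g i) -> rsum N f = rsum N g.
Proof.
  induction N as [|N IH]; simpl; intros H; [reflexivity|].
  rewrite IH, H; auto; intros; apply H; lia.
Qed.

Lemma rsum_lin N f g t s :
  rsum N (fun i => t * f i + s * g i) = t * rsum N f + s * rsum N g.
Proof. induction N as [|N IH]; simpl; [ring|]. rewrite IH; ring. Qed.

Lemma rsum_scal N f t : rsum N (fun i => t * f i) = t * rsum N f.
Proof. induction N as [|N IH]; simpl; [ring|]. rewrite IH; ring. Qed.

Lemma rsum_plus N f g : rsum N (fun i => f i + g i) = rsum N f + rsum N g.
Proof. induction N as [|N IH]; simpl; [ring|]. rewrite IH; ring. Qed.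

Lemma rsum_minus N f g : rsum N (fun i => f i - g i) = rsum N f - rsum N g.
Proof. induction N as [|N IH]; simpl; [ring|]. rewrite IH; ring. Qed.

Lemma rsum_le N f g : (forall i, (i < N)%nat -> f i <= g i) -> rsum N f <= rsum N g.
Proof.
  induction N as [|N IH]; simpl; intros H; [lra|].
  assert (f N <= g N) by (apply H; lia).
  assert (rsum N f <= rsum N g) by (apply IH; intros; apply H; lia).
  lra.
Qed.

Lemma rsum_eq_single N f i0 :
  (i0 < N)%nat -> (forall j, (j < N)%nat -> j <> i0 -> f j = 0) -> rsum N f = f i0.
Proof.
  induction N as [|N IH]; intros Hi H; [lia|]. simpl.
  destruct (Nat.eq_dec i0 N) as [->|Hne].
  - rewrite (rsum_ext N f (fun _ => 0)) by (intros; apply H; lia).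
    clear; induction N; simpl; lra.
  - rewrite IH, (H N); [lra|lia|lia|lia|]. intros; apply H; lia.
Qed.

Lemma rsum_swap N M f :
  rsum N (fun a => rsum M (fun b => f a b)) = rsum M (fun b => rsum N (fun a => f a b)).
Proof.
  induction N as [|N IH]; simpl; [induction M; simpl; lra|].
  rewrite IH, <- rsum_plus. reflexivity.
Qed.

Lemma rsum_b2R N (P : nat -> bool) : rsum N (fun j => b2R (P j)) = INR (ncount N P).
Proof.
  induction N as [|N IH]; simpl; auto.
  rewrite IH, plus_INR. destruct (P N); simpl; lra.
Qed.

Definition softplus (t : R) : R := ln (1 + exp t).
Definition sigmoid (t : R) : R := exp t / (1 + exp t).

Lemma exp_mul_le_chord p u : 0 <= p <= 1 -> exp (p * u) <= 1 - p + p * exp u.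
Proof.
  intros Hp.
  (* the tangent line of exp at p u lies below exp at 0 and at u *)
  assert (H0 := exp_ineq1_le (- (p * u))).
  assert (H1 := exp_ineq1_le ((1 - p) * u)).
  assert (E0 : exp (p * u) * exp (- (p * u)) = 1).
  { rewrite <- exp_plus, Rplus_opp_r. apply exp_0. }
  assert (E1 : exp (p * u) * exp ((1 - p) * u) = exp u).
  { rewrite <- exp_plus. f_equal; ring. }
  assert (Hpos := exp_pos (p * u)).
  assert (0 <= (1 - p) * exp (p * u) * (exp (- (p * u)) - (1 + - (p * u)))).
  { apply Rmult_le_pos; [apply Rmult_le_pos|]; lra. }
  assert (0 <= p * exp (p * u) * (exp ((1 - p) * u) - (1 + (1 - p) * u))).
  { apply Rmult_le_pos; [apply Rmult_le_pos|]; lra. }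
  nra.
Qed.

Lemma softplus_tangent z y : softplus z + sigmoid z * (y - z) <= softplus y.
Proof.
  unfold softplus, sigmoid. set (p := exp z / (1 + exp z)).
  assert (Hz := exp_pos z).
  assert (H1p : (1 + exp z) * (1 - p) = 1) by (unfold p; field; lra).
  assert (H2p : (1 + exp z) * p = exp z) by (unfold p; field; lra).
  assert (Hp : 0 <= p <= 1).
  { split; [unfold p; apply Rle_mult_inv_pos; lra|].
    destruct (Rle_dec p 1) as [|Hgt]; [assumption|].
    assert (0 < (1 + exp z) * (p - 1)) by (apply Rmult_lt_0_compat; lra). lra. }
  rewrite <- (ln_exp (p * (y - z))), <- ln_mult by (apply exp_pos || lra).
  assert (Hle : (1 + exp z) * exp (p * (y - z)) <= 1 + exp y).
  { apply Rle_trans with ((1 + exp z) * (1 - p + p * exp (y - z))).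
    - apply Rmult_le_compat_l; [lra|]. apply exp_mul_le_chord; exact Hp.
    - replace ((1 + exp z) * (1 - p + p * exp (y - z)))
        with ((1 + exp z) * (1 - p) + (1 + exp z) * p * exp (y - z)) by ring.
      rewrite H1p, H2p, <- exp_plus. replace (z + (y - z)) with y by ring. lra. }
  destruct (Req_dec ((1 + exp z) * exp (p * (y - z))) (1 + exp y)) as [->|Hne]; [lra|].
  left. apply ln_increasing; [|lra].
  apply Rmult_lt_0_compat; [lra|apply exp_pos].
Qed.

Lemma softplus_convex t a b :
  0 <= t <= 1 -> softplus (t * a + (1 - t) * b) <= t * softplus a + (1 - t) * softplus b.
Proof.
  intros Ht. set (z := t * a + (1 - t) * b).
  assert (Ha := softplus_tangent z a). assert (Hb := softplus_tangent z b).
  assert (t * (softplus z + sigmoid z * (a - z)) <= t * softplus a)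
    by (apply Rmult_le_compat_l; lra).
  assert ((1 - t) * (softplus z + sigmoid z * (b - z)) <= (1 - t) * softplus b)
    by (apply Rmult_le_compat_l; lra).
  assert (t * (a - z) + (1 - t) * (b - z) = 0) by (unfold z; ring).
  nra.
Qed.

Lemma Ldual_veq n A F x y : veq n x y -> Ldual n A F x = Ldual n A F y.
Proof.
  intros [Hfst Hsnd]. unfold Ldual. rewrite Hsnd.
  rewrite (rsum_ext n (fun a => deg n A a * fst x a) (fun a => deg n A a * fst y a))
    by (intros; rewrite Hfst; auto).
  do 2 f_equal. apply rsum_ext; intros a Ha; apply rsum_ext; intros b Hb.
  rewrite Hfst; auto.
Qed.

Definition vmix (t : R) (x y : vec) : vec :=
  (fun a => t * fst x a + (1 - t) * fst y a, t * snd x + (1 - t) * snd y).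

Lemma Ldual_convex n A F x y t :
  0 <= t <= 1 -> Ldual n A F (vmix t x y) <= t * Ldual n A F x + (1 - t) * Ldual n A F y.
Proof.
  intros Ht. unfold Ldual, vmix; simpl.
  assert (Hsp :
    rsum n (fun a => rsum n (fun b =>
      softplus (t * fst x a + (1 - t) * fst y a + (t * snd x + (1 - t) * snd y) * F a b)))
    <= t * rsum n (fun a => rsum n (fun b => softplus (fst x a + snd x * F a b)))
       + (1 - t) * rsum n (fun a => rsum n (fun b => softplus (fst y a + snd y * F a b)))).
  { rewrite <- rsum_lin. apply rsum_le; intros a Ha.
    rewrite <- rsum_lin. apply rsum_le; intros b Hb.
    replace (t * fst x a + (1 - t) * fst y a + (t * snd x + (1 - t) * snd y) * F a b)
      with (t * (fst x a + snd x * F a b) + (1 - t) * (fst y a + snd y * F a b)) by ring.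
    apply softplus_convex; exact Ht. }
  unfold softplus in Hsp.
  rewrite (rsum_ext n (fun a => deg n A a * (t * fst x a + (1 - t) * fst y a))
    (fun a => t * (deg n A a * fst x a) + (1 - t) * (deg n A a * fst y a))) by (intros; ring).
  rewrite rsum_lin. nra.
Qed.

Lemma lincomb_mix n r v c1 c2 t :
  veq n (lincomb r v (fun i => t * c1 i + (1 - t) * c2 i))
        (vmix t (lincomb r v c1) (lincomb r v c2)).
Proof.
  unfold veq, lincomb, vmix; simpl. split; [intros a _|];
    rewrite <- rsum_lin; apply rsum_ext; intros; ring.
Qed.

Lemma Ldual_lincomb_convex n A F r v :
  convex_on_Rr (fun coef => Ldual n A F (lincomb r v coef)).
Proof.
  intros c1 c2 t Ht. rewrite (Ldual_veq _ _ _ _ _ (lincomb_mix n r v c1 c2 t)).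
  apply Ldual_convex; exact Ht.
Qed.

Lemma ncount_pos N P i : (i < N)%nat -> P i = true -> (1 <= ncount N P)%nat.
Proof.
  induction N as [|N IH]; intros Hi HP; [lia|]. simpl.
  destruct (Nat.eq_dec i N) as [->|Hne]; [rewrite HP; lia|].
  assert (1 <= ncount N P)%nat by (apply IH; auto; lia). lia.
Qed.

Section Classes.

Variable n : nat.
Variable E : nat -> nat -> bool.
Hypothesis E_refl : forall a, E a a = true.
Hypothesis E_sym : forall a b, E a b = E b a.
Hypothesis E_congr : forall a b c, E a b = true -> E a c = E b c.

Definition class_constant (h : nat -> R) : Prop :=
  forall a b, (a < n)%nat -> (b < n)%nat -> E a b = true -> h a = h b.

Definition class_size (a : nat) : R := rsum n (fun b => b2R (E a b)).

Definition class_avg (x : nat -> R) (a : nat) : R :=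
  rsum n (fun b => b2R (E a b) * x b) / class_size a.

Lemma class_size_ge1 a : (a < n)%nat -> 1 <= class_size a.
Proof.
  intros Ha. unfold class_size. rewrite rsum_b2R. apply (le_INR 1).
  apply (ncount_pos _ _ a); auto.
Qed.

Lemma class_size_congr a b : E a b = true -> class_size a = class_size b.
Proof. intros H. apply rsum_ext; intros. rewrite (E_congr _ _ _ H). reflexivity. Qed.

Lemma class_avg_congr x a b : E a b = true -> class_avg x a = class_avg x b.
Proof.
  intros H. unfold class_avg. rewrite (class_size_congr _ _ H). f_equal.
  apply rsum_ext; intros. rewrite (E_congr _ _ _ H). reflexivity.
Qed.

Lemma class_avg_constant x : class_constant (class_avg x).
Proof. intros a b _ _. apply class_avg_congr. Qed.

(* Averaging over classes is self-adjoint and fixes class-constant vectors. *)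
Lemma rsum_mul_class_avg h x :
  class_constant h -> rsum n (fun a => h a * class_avg x a) = rsum n (fun a => h a * x a).
Proof.
  intros Hh. unfold class_avg.
  rewrite (rsum_ext n _ (fun a => rsum n (fun b => h a / class_size a * b2R (E a b) * x b))).
  2: { intros a Ha.
       transitivity (h a / class_size a * rsum n (fun b => b2R (E a b) * x b));
         [unfold Rdiv; ring|].
       rewrite <- rsum_scal. apply rsum_ext; intros; ring. }
  rewrite rsum_swap. apply rsum_ext; intros b Hb.
  rewrite (rsum_ext n _ (fun a => h b / class_size b * x b * b2R (E b a))).
  2: { intros a Ha. rewrite (E_sym a b). destruct (E b a) eqn:Hba; simpl; [|ring].
       rewrite (Hh a b), (class_size_congr a b); [ring| |auto|auto|]; rewrite E_sym; exact Hba. }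
  rewrite rsum_scal. fold (class_size b).
  assert (Hs := class_size_ge1 b Hb). field. lra.
Qed.

Definition class_avg_vec (x : vec) : vec := (class_avg (fst x), snd x).

Lemma Ldual_class_avg_le A F x :
  (forall a c b, (a < n)%nat -> (c < n)%nat -> (b < n)%nat -> E a c = true -> F a b = F c b) ->
  class_constant (deg n A) ->
  Ldual n A F (class_avg_vec x) <= Ldual n A F x.
Proof.
  intros HF Hdeg. set (y := class_avg (fst x)). set (mu := snd x).
  set (grad := fun a => rsum n (fun b => sigmoid (y a + mu * F a b))).
  assert (Hgrad : class_constant grad).
  { intros a c Ha Hc Hac. unfold grad. apply rsum_ext; intros b Hb.
    unfold y. rewrite (class_avg_congr _ _ _ Hac), (HF a c b); auto. }
  assert (Htangent :
    rsum n (fun a => rsum n (fun b => softplus (y a + mu * F a b)))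
      + rsum n (fun a => grad a * (fst x a - y a))
    <= rsum n (fun a => rsum n (fun b => softplus (fst x a + mu * F a b)))).
  { rewrite <- rsum_plus. apply rsum_le; intros a Ha. unfold grad.
    rewrite Rmult_comm, <- rsum_scal, <- rsum_plus. apply rsum_le; intros b Hb.
    pose proof (softplus_tangent (y a + mu * F a b) (fst x a + mu * F a b)) as T.
    replace (fst x a + mu * F a b - (y a + mu * F a b)) with (fst x a - y a) in T by ring.
    lra. }
  assert (Hgrad0 : rsum n (fun a => grad a * (fst x a - y a)) = 0).
  { rewrite (rsum_ext n _ (fun a => grad a * fst x a - grad a * y a)) by (intros; ring).
    rewrite rsum_minus. unfold y. rewrite rsum_mul_class_avg by exact Hgrad. ring. }
  assert (Hdeg0 : rsum n (fun a => deg n A a * y a) = rsum n (fun a => deg n A a * fst x a))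
    by (apply rsum_mul_class_avg; exact Hdeg).
  unfold Ldual, class_avg_vec; simpl. fold y mu. unfold softplus in Htangent.
  rewrite Hdeg0. lra.
Qed.

Definition is_class_rep (a : nat) : bool := negb (existsb (E a) (seq 0 a)).
Definition class_reps : list nat := filter is_class_rep (seq 0 n).

Lemma In_class_reps a : In a class_reps <-> (a < n)%nat /\ is_class_rep a = true.
Proof. unfold class_reps. rewrite filter_In, in_seq. split; intros [H1 H2]; split; auto; lia. Qed.

Lemma class_rep_exists a : exists b, (b <= a)%nat /\ E a b = true /\ is_class_rep b = true.
Proof.
  induction a as [a IH] using (well_founded_induction Wf_nat.lt_wf).
  destruct (is_class_rep a) eqn:Ha; [exists a; auto|].
  apply Bool.negb_false_iff, existsb_exists in Ha. destruct Ha as [c [Hc Hac]].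
  apply in_seq in Hc. destruct (IH c ltac:(lia)) as [b [Hbc [Hcb Hb]]].
  exists b. split; [lia|]. rewrite (E_congr _ _ _ Hac). auto.
Qed.

Lemma class_reps_cover a : (a < n)%nat -> exists b, In b class_reps /\ E a b = true.
Proof.
  intros Ha. destruct (class_rep_exists a) as [b [Hba [Hab Hb]]].
  exists b. split; [apply In_class_reps; split; [lia|]|]; assumption.
Qed.

Lemma class_reps_inequiv a b : In a class_reps -> In b class_reps -> E a b = true -> a = b.
Proof.
  intros Ha Hb Hab. apply In_class_reps in Ha, Hb. destruct Ha as [_ Ha], Hb as [_ Hb].
  unfold is_class_rep in Ha, Hb. apply Bool.negb_true_iff in Ha, Hb.
  destruct (Nat.lt_total a b) as [Hlt|[Heq|Hlt]]; [exfalso| |exfalso]; auto.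
  - rewrite <- Bool.not_true_iff_false, existsb_exists in Hb. apply Hb.
    exists a. rewrite in_seq, E_sym. split; [lia|exact Hab].
  - rewrite <- Bool.not_true_iff_false, existsb_exists in Ha. apply Ha.
    exists b. rewrite in_seq. split; [lia|exact Hab].
Qed.

Definition class_rep (i : nat) : nat := nth i class_reps 0%nat.

Lemma class_rep_in i : (i < length class_reps)%nat -> In (class_rep i) class_reps.
Proof. apply nth_In. Qed.

Lemma class_rep_inj i j :
  (i < length class_reps)%nat -> (j < length class_reps)%nat ->
  E (class_rep i) (class_rep j) = true -> i = j.
Proof.
  intros Hi Hj Hij. apply class_reps_inequiv in Hij; try apply class_rep_in; auto.
  apply (NoDup_nth class_reps 0%nat); auto.
  apply NoDup_filter, seq_NoDup.
Qed.

Definition class_basis (i : nat) : vec :=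
  if (i <? length class_reps)%nat then (fun a => b2R (E a (class_rep i)), 0)
  else (fun _ => 0, 1).

Lemma lincomb_class_basis_fst coef a i :
  (i < length class_reps)%nat -> E a (class_rep i) = true ->
  fst (lincomb (S (length class_reps)) class_basis coef) a = coef i.
Proof.
  intros Hi Hai. unfold lincomb; cbn [fst].
  rewrite (rsum_eq_single _ _ i); [|lia|].
  - unfold class_basis. apply Nat.ltb_lt in Hi. rewrite Hi. cbn [fst]. rewrite Hai. simpl. ring.
  - intros j Hj Hji. unfold class_basis. destruct (Nat.ltb_spec j (length class_reps)); simpl; [|ring].
    destruct (E a (class_rep j)) eqn:Haj; simpl; [|ring].
    exfalso. apply Hji, class_rep_inj; auto. rewrite <- (E_congr _ _ _ Haj). exact Hai.
Qed.

Lemma lincomb_class_basis_snd coef :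
  snd (lincomb (S (length class_reps)) class_basis coef) = coef (length class_reps).
Proof.
  unfold lincomb; cbn [snd]. rewrite (rsum_eq_single _ _ (length class_reps)); [|lia|].
  - unfold class_basis. rewrite Nat.ltb_irrefl. simpl. ring.
  - intros j Hj Hne. unfold class_basis. replace (j <? length class_reps)%nat with true
      by (symmetry; apply Nat.ltb_lt; lia). simpl. ring.
Qed.

Lemma class_basis_is_basis :
  is_basis n (fun x => class_constant (fst x)) (S (length class_reps)) class_basis.
Proof.
  split; [|split].
  - intros i Hi a b Ha Hb Hab. unfold class_basis.
    destruct (Nat.ltb_spec i (length class_reps)); simpl; [|reflexivity].
    rewrite (E_congr _ _ _ Hab). reflexivity.
  - intros w Hw.
    exists (fun i => if (i <? length class_reps)%nat then fst w (class_rep i) else snd w).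
    split.
    + intros a Ha. destruct (class_reps_cover a Ha) as [b [Hb Hab]].
      destruct (In_nth _ _ 0%nat Hb) as [i [Hi Hib]].
      rewrite (lincomb_class_basis_fst _ a i); auto.
      2: { unfold class_rep. rewrite Hib. exact Hab. }
      apply Nat.ltb_lt in Hi as Hi'. rewrite Hi'. unfold class_rep. rewrite Hib.
      apply Hw; auto. apply In_class_reps in Hb. tauto.
    + rewrite lincomb_class_basis_snd, Nat.ltb_irrefl. reflexivity.
  - intros coef [Hfst Hsnd] i Hi.
    destruct (Nat.eq_dec i (length class_reps)) as [->|Hne].
    + rewrite <- lincomb_class_basis_snd. exact Hsnd.
    + assert (Hi' : (i < length class_reps)%nat) by lia.
      rewrite <- (lincomb_class_basis_fst coef (class_rep i) i Hi' (E_refl _)).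
      apply Hfst. apply In_class_reps, class_rep_in. exact Hi'.
Qed.

End Classes.

Section NatSums.

Local Open Scope nat_scope.

Lemma nsum_ext N f g : (forall i, i < N -> f i = g i) -> nsum N f = nsum N g.
Proof.
  induction N as [|N IH]; simpl; intros H; [reflexivity|].
  rewrite IH, H; auto; intros; apply H; lia.
Qed.

Lemma nsum_plus N f g : nsum N (fun i => f i + g i) = nsum N f + nsum N g.
Proof. induction N as [|N IH]; simpl; [reflexivity|]. rewrite IH; lia. Qed.

Lemma nsum_le N f g : (forall i, i < N -> f i <= g i) -> nsum N f <= nsum N g.
Proof.
  induction N as [|N IH]; simpl; intros H; [lia|].
  assert (f N <= g N) by (apply H; lia).
  assert (nsum N f <= nsum N g) by (apply IH; intros; apply H; lia).
  lia.
Qed.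

Lemma nsum_scal N f c : nsum N (fun i => c * f i) = c * nsum N f.
Proof. induction N as [|N IH]; simpl; [lia|]. rewrite IH; lia. Qed.

Lemma nsum_delta N g d : nsum N (fun p => if g =? p then d else 0) = if g <? N then d else 0.
Proof.
  induction N as [|N IH]; simpl; [reflexivity|]. rewrite IH.
  destruct (Nat.eqb_spec g N), (Nat.ltb_spec g N), (Nat.ltb_spec g (S N)); lia.
Qed.

Lemma nsum_seq N g : nsum N g = list_sum (map g (seq 0 N)).
Proof.
  induction N as [|N IH]; [reflexivity|].
  rewrite seq_S, map_app, list_sum_app, <- IH. simpl. lia.
Qed.

Lemma list_sum_map_const1 {T} (l : list T) : list_sum (map (fun _ => 1) l) = length l.
Proof. induction l as [|x l IH]; simpl; lia. Qed.

Lemma list_sum_split_by (f grp : nat -> nat) k l :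
  (forall a, In a l -> grp a < k) ->
  list_sum (map f l) = nsum k (fun p => list_sum (map f (filter (fun a => grp a =? p) l))).
Proof.
  induction l as [|x l IH]; intros Hl; simpl.
  - clear. induction k; simpl; lia.
  - rewrite (nsum_ext k _ (fun p => list_sum (map f (filter (fun a => grp a =? p) l))
                                      + (if grp x =? p then f x else 0))).
    + rewrite nsum_plus, nsum_delta, <- IH by (intros; apply Hl; simpl; auto).
      replace (grp x <? k) with true by (symmetry; apply Nat.ltb_lt, Hl; simpl; auto). lia.
    + intros p _. destruct (grp x =? p); simpl; lia.
Qed.

Lemma list_sum_filter_filter_le (f : nat -> nat) (P Q : nat -> bool) s :
  list_sum (map f (filter Q (filter P s))) <= list_sum (map f (filter Q s)).
Proof.
  induction s as [|x s IH]; simpl; [lia|].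
  destruct (P x); simpl; destruct (Q x); simpl; lia.
Qed.

Lemma nsum_mul_le_sq k c x : 2 * nsum k c * x <= nsum k (fun p => c p * c p) + k * (x * x).
Proof.
  induction k as [|k IH]; simpl; [lia|].
  assert (2 * c k * x <= c k * c k + x * x).
  { destruct (Nat.le_ge_cases (c k) x).
    - replace x with (c k + (x - c k)) by lia. nia.
    - replace (c k) with (x + (c k - x)) by lia. nia. }
  nia.
Qed.

Lemma nsum_sq_le k c : nsum k c * nsum k c <= k * nsum k (fun p => c p * c p).
Proof.
  induction k as [|k IH]; simpl; [lia|].
  pose proof (nsum_mul_le_sq k c (c k)). nia.
Qed.

Lemma remove_In_NoDup (x : nat) l : In x l -> NoDup l ->
  length l = S (length (remove Nat.eq_dec x l)) /\
  list_sum l = x + list_sum (remove Nat.eq_dec x l) /\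
  NoDup (remove Nat.eq_dec x l).
Proof.
  induction l as [|y l IH]; intros Hin Hnd; [destruct Hin|].
  inversion Hnd as [|? ? Hy Hl]; subst. simpl. destruct (Nat.eq_dec x y) as [->|Hne].
  - rewrite notin_remove by exact Hy. auto.
  - destruct Hin as [->|Hin]; [congruence|]. destruct (IH Hin Hl) as [E1 [E2 E3]].
    simpl. rewrite E1, E2. repeat split; [lia|]. constructor; [|exact E3].
    intros Hc. apply in_remove in Hc. tauto.
Qed.

Lemma NoDup_list_sum_lower_bound B l : NoDup l -> (forall x, In x l -> 1 <= x <= B) ->
  length l * (length l + 1) <= 2 * list_sum l.
Proof.
  revert l. induction B as [|B IH]; intros l Hnd Hb.
  - destruct l as [|y l]; simpl; [lia|]. specialize (Hb y (or_introl eq_refl)). lia.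
  - destruct (in_dec Nat.eq_dec (S B) l) as [Hin|Hnin].
    + destruct (remove_In_NoDup _ _ Hin Hnd) as [E1 [E2 E3]].
      assert (Hlen : length l <= S B).
      { rewrite <- (length_seq (S B) 1). apply NoDup_incl_length; [exact Hnd|].
        intros z Hz. apply in_seq. specialize (Hb z Hz). lia. }
      assert (H : length (remove Nat.eq_dec (S B) l) * (length (remove Nat.eq_dec (S B) l) + 1)
                  <= 2 * list_sum (remove Nat.eq_dec (S B) l)).
      { apply IH; [exact E3|]. intros z Hz. apply in_remove in Hz. destruct Hz as [Hz1 Hz2].
        specialize (Hb z Hz1). lia. }
      rewrite E1, E2. rewrite E1 in Hlen. nia.
    + apply IH; [exact Hnd|]. intros z Hz. specialize (Hb z Hz).
      assert (z <> S B) by (intros ->; tauto). lia.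
Qed.

Lemma ncount_le N P : ncount N P <= N.
Proof. induction N as [|N IH]; simpl; [lia|]. destruct (P N); lia. Qed.

End NatSums.

Definition degn (n : nat) (A : nat -> nat -> bool) (a : nat) : nat := ncount n (A a).

Definition same_class (n : nat) (A : nat -> nat -> bool) (grp : nat -> nat) (a b : nat) : bool :=
  (grp a =? grp b)%nat && (degn n A a =? degn n A b)%nat.

Lemma deg_degn n A a : deg n A a = INR (degn n A a).
Proof. apply rsum_b2R. Qed.

Lemma same_class_spec n A grp a b :
  same_class n A grp a b = true <-> grp a = grp b /\ degn n A a = degn n A b.
Proof. unfold same_class. rewrite Bool.andb_true_iff, !Nat.eqb_eq. reflexivity. Qed.

Lemma same_class_refl n A grp a : same_class n A grp a a = true.
Proof. apply same_class_spec; auto. Qed.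

Lemma same_class_sym n A grp a b : same_class n A grp a b = same_class n A grp b a.
Proof. unfold same_class. rewrite (Nat.eqb_sym (grp a)), (Nat.eqb_sym (degn n A a)). reflexivity. Qed.

Lemma same_class_congr n A grp a b c :
  same_class n A grp a b = true -> same_class n A grp a c = same_class n A grp b c.
Proof. intros [Hg Hd]%same_class_spec. unfold same_class. rewrite Hg, Hd. reflexivity. Qed.

Lemma inW_class_constant n A grp x :
  inW n A grp x <-> class_constant n (same_class n A grp) (fst x).
Proof.
  split.
  - intros Hx a b Ha Hb [Hg Hd]%same_class_spec. apply Hx; auto. rewrite !deg_degn, Hd. reflexivity.
  - intros Hx a b Ha Hb Hg Hd. apply Hx; auto. apply same_class_spec. split; [exact Hg|].
    apply INR_eq. rewrite <- !deg_degn. exact Hd.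
Qed.

Lemma is_basis_equiv n (P Q : vec -> Prop) r v :
  (forall x, P x <-> Q x) -> is_basis n P r v -> is_basis n Q r v.
Proof.
  intros HPQ [Hin [Hspan Hfree]]. split; [|split]; auto.
  - intros i Hi. apply HPQ, Hin, Hi.
  - intros w Hw. apply Hspan, HPQ, Hw.
Qed.

Section ClassCount.

Local Open Scope nat_scope.

Variables (n k : nat) (A : nat -> nat -> bool) (grp : nat -> nat).
Hypothesis Hrow : forall i, i < n -> exists j, j < n /\ A i j = true.
Hypothesis Hgrp : forall a, a < n -> grp a < k.

Let reps := class_reps n (same_class n A grp).
Let in_group p := fun a => grp a =? p.

(* Representatives in one group have pairwise distinct degrees, all in [1, n]. *)
Lemma class_reps_in_group_bound p :
  length (filter (in_group p) reps) * (length (filter (in_group p) reps) + 1)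
  <= 2 * list_sum (map (degn n A) (filter (in_group p) (seq 0 n))).
Proof.
  set (lp := filter (in_group p) reps).
  assert (Hnd : NoDup (map (degn n A) lp)).
  { apply NoDup_map_NoDup_ForallPairs.
    - intros x y Hx Hy Hd. unfold lp in Hx, Hy. apply filter_In in Hx, Hy.
      destruct Hx as [Hx Hgx], Hy as [Hy Hgy]. unfold in_group in Hgx, Hgy.
      apply Nat.eqb_eq in Hgx, Hgy.
      apply (class_reps_inequiv n (same_class n A grp)); auto.
      + apply same_class_sym.
      + apply same_class_spec. split; congruence.
    - apply NoDup_filter, NoDup_filter, seq_NoDup. }
  assert (Hsum : list_sum (map (degn n A) lp)
                 <= list_sum (map (degn n A) (filter (in_group p) (seq 0 n))))
    by apply list_sum_filter_filter_le.
  assert (Hrange : forall x, In x (map (degn n A) lp) -> 1 <= x <= n).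
  { intros x Hx. apply in_map_iff in Hx. destruct Hx as [a [<- Ha]].
    unfold lp in Ha. apply filter_In in Ha. destruct Ha as [Ha _].
    apply In_class_reps in Ha. destruct Ha as [Ha _].
    destruct (Hrow a Ha) as [j [Hj HA]]. split.
    - apply (ncount_pos _ _ j); auto.
    - apply ncount_le. }
  pose proof (NoDup_list_sum_lower_bound n _ Hnd Hrange) as Hbound.
  rewrite length_map in Hbound. lia.
Qed.

Lemma class_reps_sq_le m : nnz n A = m -> length reps * length reps <= 2 * k * m.
Proof.
  intros Hm.
  set (c := fun p => length (filter (in_group p) reps)).
  set (deg_sum := fun p => list_sum (map (degn n A) (filter (in_group p) (seq 0 n)))).
  assert (Hlen : length reps = nsum k c).
  { rewrite <- list_sum_map_const1, (list_sum_split_by _ grp k).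
    - apply nsum_ext; intros. apply list_sum_map_const1.
    - intros a Ha. apply Hgrp. apply In_class_reps in Ha. tauto. }
  assert (HS : nsum k deg_sum = m).
  { rewrite <- Hm. unfold nnz. rewrite (nsum_seq n). symmetry.
    apply (list_sum_split_by (degn n A) grp k).
    intros a Ha. apply Hgrp. apply in_seq in Ha. lia. }
  assert (Hc : nsum k (fun p => c p * c p) <= nsum k (fun p => 2 * deg_sum p)).
  { apply nsum_le; intros p _. pose proof (class_reps_in_group_bound p). unfold c, deg_sum. nia. }
  rewrite nsum_scal, HS in Hc.
  rewrite Hlen. pose proof (nsum_sq_le k c). nia.
Qed.

End ClassCount.

Lemma INR_le_sqrt_INR a b : (a * a <= b)%nat -> INR a <= sqrt (INR b).
Proof.
  intros H. rewrite <- (sqrt_square (INR a)) by apply pos_INR.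
  apply sqrt_le_1_alt. rewrite <- mult_INR. apply le_INR, H.
Qed.

Lemma class_avg_vec_inW n A grp x : inW n A grp (class_avg_vec n (same_class n A grp) x).
Proof.
  apply inW_class_constant, class_avg_constant, same_class_congr.
Qed.

Lemma Ldual_class_avg_vec_le n A grp (C F : nat -> nat -> R) x :
  (forall a b, (a < n)%nat -> (b < n)%nat -> F a b = C (grp a) (grp b)) ->
  Ldual n A F (class_avg_vec n (same_class n A grp) x) <= Ldual n A F x.
Proof.
  intros HF. apply Ldual_class_avg_le.
  - apply same_class_refl.
  - apply same_class_sym.
  - apply same_class_congr.
  - intros a c b Ha Hc Hb [Hg _]%same_class_spec. rewrite !HF, Hg; auto.
  - intros a c _ _ [_ Hd]%same_class_spec. rewrite !deg_degn, Hd. reflexivity.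
Qed.

Theorem theorem1 (n m k : nat) (A : nat -> nat -> bool) (grp : nat -> nat)
  (C : nat -> nat -> R) (F : nat -> nat -> R)
  (HAsym : forall i j, (i < n)%nat -> (j < n)%nat -> A i j = A j i)
  (Hm : nnz n A = m)
  (Hrow : forall i, (i < n)%nat -> exists j, (j < n)%nat /\ A i j = true)
  (Hgrp : forall a, (a < n)%nat -> (grp a < k)%nat)
  (Hgrp_ne : forall p, (p < k)%nat -> exists a, (a < n)%nat /\ grp a = p)
  (HCsym : forall p q, (p < k)%nat -> (q < k)%nat -> C p q = C q p)
  (HF : forall a b, (a < n)%nat -> (b < n)%nat -> F a b = C (grp a) (grp b)) :
  let L := Ldual n A F in
  let W := inW n A grp in
  (exists (r : nat) (v : nat -> vec),
      is_basis n W r v /\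
      INR r <= sqrt (2 * INR k * INR m) + 1 /\
      convex_on_Rr (fun coef => L (lincomb r v coef))) /\
  (forall (x : vec) (eps : R), 0 < eps -> exists w, W w /\ L w < L x + eps) /\
  (forall w : vec, W w -> (forall w', W w' -> L w <= L w') ->
     forall x : vec, L w <= L x).
Proof.
  intros L W. set (E := same_class n A grp).
  assert (Havg : forall x, W (class_avg_vec n E x) /\ L (class_avg_vec n E x) <= L x).
  { intros x. split; [apply class_avg_vec_inW|]. apply (Ldual_class_avg_vec_le _ _ _ C); exact HF. }
  split; [|split].
  - exists (S (length (class_reps n E))), (class_basis n E). split; [|split].
    + apply (is_basis_equiv n (fun x => class_constant n E (fst x))).
      { intros x. symmetry. apply inW_class_constant. }
      apply class_basis_is_basis; [apply same_class_refl|apply same_class_sym|apply same_class_congr].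
    + rewrite S_INR. apply Rplus_le_compat_r.
      replace (2 * INR k * INR m) with (INR (2 * k * m)) by (rewrite !mult_INR; simpl; ring).
      apply INR_le_sqrt_INR, class_reps_sq_le; assumption.
    + apply Ldual_lincomb_convex.
  - intros x eps Heps. exists (class_avg_vec n E x). destruct (Havg x). split; [assumption|lra].
  - intros w Hw Hmin x. destruct (Havg x) as [HWx Hle]. specialize (Hmin _ HWx). lra.
Qed.
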